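(* Let $S$ be a pairwise-intersecting double-interval society with $n\ge 1$ voters and approval number $a(S)$. Then $$a(S)\ \ge\ \left\lceil 2n+\tfrac12-\sqrt{3n^2-n+\tfrac14}\right\rceil,$$ so that $$\frac{a(S)}{n}\ \ge\ 2-\sqrt3+\frac{3+\sqrt3}{6n}-\frac{\sqrt3}{24n^2},$$ and equivalently $$n\ \le\ \left\lfloor 2a(S)-\tfrac32+\sqrt{3a(S)^2-5a(S)+\tfrac94}\right\rfloor.$$
   Context: A double-interval society consists of a finite set $V$ of $n$ voters, each voter $v$ having an approval set $A_v\subseteq\mathbb{R}$ that is the union of two disjoint bounded closed intervals. The society is pairwise-intersecting if $A_u\cap A_v\neq\emptyset$ for all voters $u,v$. For a point (platform) $p\in\mathbb{R}$, its approval number $a(p)$ is the number of voters $v$ with $p\in A_v$; the approval number of the society is $a(S)=\max_{p\in\mathbb{R}}a(p)$, and its approval ratio is $a(S)/n$. *)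

From Stdlib Require Import Reals Lra ZArith List.
Open Scope R_scope.

Record dinterval := DI { l1 : R; r1 : R; l2 : R; r2 : R }.

Definition valid_dinterval (A : dinterval) : Prop :=
  l1 A <= r1 A /\ r1 A < l2 A /\ l2 A <= r2 A.

Definition approves (A : dinterval) (p : R) : Prop :=
  (l1 A <= p <= r1 A) \/ (l2 A <= p <= r2 A).

Definition Rleb (x y : R) : bool := if Rle_dec x y then true else false.

Definition approvesb (A : dinterval) (p : R) : bool :=
  (Rleb (l1 A) p && Rleb p (r1 A)) || (Rleb (l2 A) p && Rleb p (r2 A)).

(* A society is the list of the approval sets of its voters (n = length). *)
Definition society := list dinterval.

Definition double_interval_society (S : society) : Prop :=
  Forall valid_dinterval S.

Definition pairwise_intersecting (S : society) : Prop :=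
  forall u v, In u S -> In v S -> exists p, approves u p /\ approves v p.

Definition approval (S : society) (p : R) : nat :=
  length (filter (fun A => approvesb A p) S).

Definition is_approval_number (S : society) (k : nat) : Prop :=
  (exists p, approval S p = k) /\ (forall p, (approval S p <= k)%nat).

Definition Rfloor (x : R) : Z := (up x - 1)%Z.
Definition Rceil (x : R) : Z := (- Rfloor (- x))%Z.

(* Label the 2n intervals of the society and sort them by left endpoint.
   For an interval of rank j, call "earlier" the voters other than its owner
   having an interval of smaller rank that contains its left endpoint.  Such
   voters have distinct earlier intervals, so there are at most j of them, and
   together with the owner they all approve that left endpoint, so there are at
   most k - 1 of them.  Conversely every ordered pair (u, v) of distinct voters
   has two meeting intervals; the later one (rank j) has its left endpoint in
   the other one, so the pair yields an earlier voter of rank j, and (j, that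
   voter, the orientation bit u < v) determines (u, v).  Hence
     n (n - 1) <= 2 * sum_(j < 2n) min (k - 1, j),
   which evaluates to the quadratic inequality n^2 + k^2 + 3n <= 4nk + k. *)

From Stdlib Require Import Reals ZArith List Lra Lia Psatz.

(* MathComp is imported locally so that its notations do not change the
   meaning of the (Stdlib) statement of the main theorem. *)
Module Counting.
From mathcomp Require Import all_boot zify.
Open Scope nat_scope.

Lemma RlebP (x y : R) : reflect (Rle x y) (Rleb x y).
Proof. by rewrite /Rleb; case: Rle_dec => h; constructor. Qed.

Lemma length_size (T : Type) (s : list T) : length s = size s.
Proof. by elim: s => //= x s ->. Qed.

Lemma length_filter (T : Type) (f : T -> bool) (s : list T) :
  length (List.filter f s) = count f s.
Proof. by elim: s => //= x s IH; case: (f x); rewrite /= IH. Qed.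

Lemma In_nth {T : Type} {d : T} {s : seq T} {i : nat} : i < size s -> In (nth d s i) s.
Proof. by elim: s i => //= x s IH [|i] /= lti; [left | right; apply: IH]. Qed.

Lemma card_nth {T : Type} (d : T) (s : seq T) (f : pred T) :
  #|[set i : 'I_(size s) | f (nth d s i)]| = count f s.
Proof.
by rewrite -sum1dep_card -(big_mkord (fun i => f (nth d s i)) (fun _ => 1))
  -sum1_count (big_nth d).
Qed.

Lemma card_dep_pairs (T1 T2 : finType) (F : T1 -> {set T2}) :
  #|[set x : T1 * T2 | x.2 \in F x.1]| = \sum_i #|F i|.
Proof.
rewrite -sum1dep_card; under [RHS]eq_bigr => i _ do rewrite -sum1_card.
by rewrite pair_big_dep /=; apply: eq_bigl => -[x y].
Qed.

Lemma card_offdiag (T : finType) : #|[set uv : T * T | uv.1 != uv.2]| = #|T| * #|T|.-1.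
Proof.
rewrite (eq_card (B := [set uv : T * T | uv.2 \in [set~ uv.1]])); last first.
  by move=> [x y]; rewrite !inE eq_sym.
rewrite (@card_dep_pairs T T (fun x => [set~ x])); under eq_bigr => x _ do rewrite cardsC1.
by rewrite sum_nat_const.
Qed.

(* Closed form of the bounding sum: while j < k the terms are j, afterwards
   they are constantly k - 1. *)
Lemma sum_min_pred_small k N : N <= k -> 2 * \sum_(j < N) minn k.-1 j = N * N.-1.
Proof.
elim: N => [|N IH] leNk; first by rewrite big_ord0.
rewrite big_ord_recr /= mulnDr IH; last exact: ltnW.
have -> : minn k.-1 N = N by lia.
by case: N {IH leNk} => //= N; nia.
Qed.

Lemma sum_min_pred k m : 0 < k ->
  2 * \sum_(j < k + m) minn k.-1 j = k * k.-1 + 2 * m * k.-1.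
Proof.
move=> k_gt0; elim: m => [|m IH]; first by rewrite addn0 sum_min_pred_small ?muln0 ?addn0.
rewrite addnS big_ord_recr /= mulnDr IH.
have -> : minn k.-1 (k + m) = k.-1 by lia.
nia.
Qed.

Lemma quadratic_of_pair_count {n k : nat} : 0 < k -> k <= n ->
  n * n.-1 <= 2 * \sum_(j < n * 2) minn k.-1 j ->
  n * n + k * k + 3 * n <= 4 * n * k + k.
Proof.
move=> k_gt0 le_kn; have -> : n * 2 = k + (n * 2 - k) by lia.
rewrite sum_min_pred //.
by case: k k_gt0 le_kn => // k _ le_kn; case: n le_kn => //= n le_kn; nia.
Qed.

Definition lo (A : dinterval) (b : bool) : R := if b then l2 A else l1 A.
Definition hi (A : dinterval) (b : bool) : R := if b then r2 A else r1 A.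
Definition inside (A : dinterval) (b : bool) (p : R) : bool :=
  Rleb (lo A b) p && Rleb p (hi A b).

Lemma approvesbE A p : approvesb A p = inside A false p || inside A true p.
Proof. by []. Qed.

Lemma inside_lo A b : valid_dinterval A -> inside A b (lo A b).
Proof.
by case=> h1 [h2 h3]; apply/andP; split; apply/RlebP; case: b; rewrite /lo /hi; lra.
Qed.

Lemma approvesb_lo A b : valid_dinterval A -> approvesb A (lo A b).
Proof. by move=> /(inside_lo _ b); rewrite approvesbE; case: b => ->; rewrite ?orbT. Qed.

Definition meets (A B : dinterval) (bb : bool * bool) : bool :=
  Rleb (lo A bb.1) (hi B bb.2) && Rleb (lo B bb.2) (hi A bb.1).

Lemma meets_approves {A B : dinterval} {p : R} :
  approves A p -> approves B p -> exists bb, meets A B bb.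
Proof.
have inside_of C : approves C p -> exists b, Rle (lo C b) p /\ Rle p (hi C b).
  by case=> h; [exists false | exists true].
move=> /inside_of [bA [hA hA']] /inside_of [bB [hB hB']].
by exists (bA, bB); apply/andP; split; apply/RlebP; rewrite /=; lra.
Qed.

Definition no_voter : dinterval := DI R0 R0 R0 R0.

Section PairCount.
Variables (S : society) (k : nat).
Hypothesis S_valid : double_interval_society S.
Hypothesis S_meet : pairwise_intersecting S.
Hypothesis S_k : is_approval_number S k.

Let n := size S.
Let V (u : nat) : dinterval := nth no_voter S u.

Lemma V_valid u : u < n -> valid_dinterval (V u).
Proof.
move=> ltun; move: S_valid; rewrite /double_interval_society Forall_forall.
by apply; apply: In_nth.
Qed.

Let lft (x : nat * bool) : R := lo (V x.1) x.2.
Let labels := [seq (u, b) | u <- iota 0 n, b <- [:: false; true]].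
Let L := sort (fun x y => Rleb (lft x) (lft y)) labels.
Let N := size L.
Let label (j : nat) := nth (0, false) L j.

Lemma size_L : N = n * 2.
Proof. by rewrite /N /L size_sort /labels size_allpairs size_iota. Qed.

Lemma mem_L x : (x \in L) = (x.1 < n).
Proof.
rewrite /L mem_sort; apply/allpairsP/idP => [[[u b] [/= + _ ->]]|ltxn].
  by rewrite mem_iota.
by exists x; case: x ltxn => u [] ltun; split; rewrite ?mem_iota.
Qed.

Lemma lft_sorted {i j : nat} : i <= j -> j < N -> Rle (lft (label i)) (lft (label j)).
Proof.
have le_trans : transitive (fun x y => Rleb (lft x) (lft y)).
  by move=> y x z /RlebP h1 /RlebP h2; apply/RlebP; lra.
have le_refl : reflexive (fun x y => Rleb (lft x) (lft y)) by move=> x; apply/RlebP; lra.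
have le_total : total (fun x y => Rleb (lft x) (lft y)).
  by move=> x y; case: (RlebP (lft x) (lft y)) => //= h; apply/RlebP; lra.
move=> le_ij ltjN; apply/RlebP.
apply: (sorted_leq_nth le_trans le_refl _ (sort_sorted le_total labels)) => //.
by rewrite inE (leq_ltn_trans le_ij).
Qed.

Lemma rank_lt (u : 'I_n) b : index (val u, b) L < N.
Proof. by rewrite index_mem mem_L /=. Qed.

Definition rank (u : 'I_n) b : 'I_N := Ordinal (rank_lt u b).

Lemma label_rank u b : label (rank u b) = (val u, b).
Proof. by rewrite /label nth_index // mem_L /=. Qed.

Lemma owner_lt (j : 'I_N) : (label j).1 < n.
Proof. by rewrite -mem_L mem_nth. Qed.

Definition owner (j : 'I_N) : 'I_n := Ordinal (owner_lt j).

Lemma owner_rank u b : owner (rank u b) = u.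
Proof. by apply: val_inj; rewrite /= label_rank. Qed.

Definition choice_of (u v : 'I_n) : bool * bool :=
  odflt (false, false) [pick bb | meets (V u) (V v) bb].

Lemma choice_meets (u v : 'I_n) : meets (V u) (V v) (choice_of u v).
Proof.
rewrite /choice_of; case: pickP => [bb //|none].
have [p [hu hv]] := S_meet (V u) (V v) (In_nth (ltn_ord u)) (In_nth (ltn_ord v)).
by have [bb] := meets_approves hu hv; rewrite none.
Qed.

Lemma meets_later {u v : 'I_n} {bu bv : bool} :
  meets (V u) (V v) (bu, bv) -> rank u bu <= rank v bv -> inside (V u) bu (lft (val v, bv)).
Proof.
move=> /andP [_ /RlebP le_vu] le_rank; apply/andP; split; apply/RlebP; last exact: le_vu.
by have := lft_sorted le_rank (ltn_ord (rank v bv)); rewrite !label_rank.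
Qed.

Definition earlier (j : 'I_N) : {set 'I_n} :=
  [set w | (w != owner j) && [exists i : 'I_N,
     [&& i < j, owner i == w & inside (V w) (label i).2 (lft (label j))]]].

(* Earlier voters are owners of intervals of rank < j. *)
Lemma earlier_le j : #|earlier j| <= j.
Proof.
have le_jN : j <= N := ltnW (ltn_ord j).
have sub : earlier j \subset [set owner (widen_ord le_jN i) | i : 'I_j].
  apply/subsetP => w; rewrite inE => /andP [_ /existsP [i /and3P [lt_ij /eqP <- _]]].
  by apply/imsetP; exists (Ordinal lt_ij) => //; congr owner; apply: val_inj.
by rewrite (leq_trans (subset_leq_card sub)) // (leq_trans (leq_imset_card _ _)) // card_ord.
Qed.

(* Earlier voters and the owner all approve the left endpoint of interval j. *)
Lemma earlier_lt j : #|earlier j| < k.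
Proof.
pose p := lft (label j).
have approvers_le : #|[set w : 'I_(size S) | approvesb (nth no_voter S w) p]| <= k.
  rewrite (card_nth no_voter S (fun A => approvesb A p)) -length_filter.
  by apply/leP; exact: (proj2 S_k p).
apply: leq_trans approvers_le; apply: proper_card; apply/properP; split.
- apply/subsetP => w; rewrite !inE => /andP [_ /existsP [i /and3P [_ /eqP <- hin]]].
  by rewrite approvesbE; case: (label i).2 hin => ->; rewrite ?orbT.
- exists (owner j); last by rewrite inE eqxx.
  by rewrite inE; exact: approvesb_lo _ _ (V_valid _ (owner_lt j)).
Qed.

Definition witness (uv : 'I_n * 'I_n) : ('I_N * 'I_n) * bool :=
  let bb := choice_of uv.1 uv.2 in
  let i := rank uv.1 bb.1 in let j := rank uv.2 bb.2 in
  (if i < j then (j, uv.1) else (i, uv.2), uv.1 < uv.2).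

Lemma witness_earlier uv : uv.1 != uv.2 -> (witness uv).1.2 \in earlier (witness uv).1.1.
Proof.
case: uv => u v /= neq_uv; rewrite /witness /=.
have := choice_meets u v; case: (choice_of u v) => bu bv /= meet_uv.
case: ltnP => [lt_uv | le_vu]; rewrite inE /= owner_rank.
- rewrite neq_uv; apply/existsP; exists (rank u bu).
  by rewrite lt_uv owner_rank eqxx !label_rank /= (meets_later meet_uv (ltnW lt_uv)).
- rewrite eq_sym neq_uv; apply/existsP; exists (rank v bv).
  have lt_vu : rank v bv < rank u bu.
    rewrite ltn_neqAle le_vu andbT; apply: contra neq_uv => /eqP /val_inj /(congr1 owner).
    by rewrite !owner_rank => ->.
  have meet_vu : meets (V v) (V u) (bv, bu) by rewrite /meets andbC.
  by rewrite lt_vu owner_rank eqxx !label_rank /= (meets_later meet_vu (ltnW lt_vu)).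
Qed.

Lemma witness_owners uv :
  let: ((j, w), _) := witness uv in ((owner j, w) == uv) || ((w, owner j) == uv).
Proof.
by case: uv => u v; rewrite /witness /=; case: ltnP => _; rewrite owner_rank eqxx ?orbT.
Qed.

Lemma witness_inj : {in [set uv | uv.1 != uv.2] &, injective witness}.
Proof.
move=> [u v] [u' v']; rewrite !inE /= => neq_uv _ e.
have orient : (u < v) = (u' < v') by have := congr1 snd e.
have := witness_owners (u, v); have := witness_owners (u', v'); rewrite -e.
case: (witness (u, v)) => [[j w] b] /=.
case/orP => /eqP [eu ev]; case/orP => /eqP [eu' ev']; subst => //; exfalso.
all: by move: orient neq_uv; case: ltngtP => // /val_inj ->; rewrite eqxx.
Qed.

Lemma pair_count : n * n.-1 <= 2 * \sum_(j < n * 2) minn k.-1 j.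
Proof.
rewrite -size_L -{1 2}[n]card_ord -card_offdiag -(card_in_imset witness_inj).
apply: (@leq_trans #|setX [set jw : 'I_N * 'I_n | jw.2 \in earlier jw.1] [set: bool]|).
  apply: subset_leq_card; apply/subsetP => _ /imsetP [uv off_uv ->].
  by rewrite in_setX in_setT inE andbT witness_earlier //; rewrite inE in off_uv.
rewrite cardsX card_dep_pairs cardsT card_bool mulnC leq_mul2l /=.
apply: leq_sum => j _; rewrite leq_min earlier_le andbT.
by move: (earlier_lt j); case: k.
Qed.

End PairCount.

Lemma approval_number_range {S : society} {k : nat} : 0 < size S -> double_interval_society S ->
  is_approval_number S k -> 0 < k <= size S.
Proof.
case: S => [//|A S'] _ S_valid [[p def_k] max_k].
apply/andP; split; last by rewrite -def_k /approval length_filter count_size.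
have A_l1 : approvesb A (l1 A) := approvesb_lo A false (Forall_inv S_valid).
by have := max_k (l1 A); rewrite /approval length_filter /= A_l1 => /leP; apply: leq_trans.
Qed.

(* The combinatorial core, n^2 + k^2 + 3n <= 4nk + k, stated with Peano
   arithmetic for use outside this module. *)
Theorem approval_number_quadratic (S : society) (k : nat) :
  (1 <= length S)%coq_nat -> double_interval_society S -> pairwise_intersecting S ->
  is_approval_number S k ->
  (length S * length S + k * k + 3 * length S <= 4 * length S * k + k)%coq_nat.
Proof.
rewrite length_size => /leP n_gt0 S_valid S_meet S_k.
have /andP [k_gt0 le_kn] := approval_number_range n_gt0 S_valid S_k.
have := quadratic_of_pair_count k_gt0 le_kn (pair_count S k S_valid S_meet S_k).
by rewrite -!plusE -!multE => /leP.
Qed.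

End Counting.

Open Scope R_scope.

Lemma quadratic_root_bounds (x m c : R) :
  x ^ 2 - 2 * m * x + c <= 0 -> m - sqrt (m ^ 2 - c) <= x <= m + sqrt (m ^ 2 - c).
Proof.
  intro Hq.
  assert (Hdist : Rabs (x - m) <= sqrt (m ^ 2 - c)).
  { rewrite <- sqrt_Rsqr_abs. apply sqrt_le_1_alt. rewrite Rsqr_pow2. nra. }
  pose proof (RRle_abs (x - m)) as Hle.
  pose proof (RRle_abs (- (x - m))) as Hge.
  rewrite Rabs_Ropp in Hge. lra.
Qed.

(* Asymptotic upper estimate of the discriminant: the gap between the two
   sides squared is (1 - 1/(4n))^2 / 12 >= 0. *)
Lemma sqrt_discriminant_bound (n : R) :
  1 <= n -> sqrt (3 * n ^ 2 - n + 1 / 4) <= sqrt 3 * (n - 1 / 6 + 1 / (24 * n)).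
Proof.
  intro Hn.
  assert (Hy : 0 <= n - 1 / 6 + 1 / (24 * n)).
  { assert (0 < 1 / (24 * n)) by (apply Rdiv_lt_0_compat; lra). lra. }
  rewrite <- (sqrt_pow2 _ Hy), <- sqrt_mult by (lra || apply pow2_ge_0).
  apply sqrt_le_1_alt.
  assert (Hsq : 3 * (n - 1 / 6 + 1 / (24 * n)) ^ 2 - (3 * n ^ 2 - n + 1 / 4)
                = (1 - 1 / (4 * n)) ^ 2 / 12) by (field; lra).
  pose proof (pow2_ge_0 (1 - 1 / (4 * n))). lra.
Qed.

Lemma ratio_of_lower_bound (n a : R) :
  1 <= n -> 2 * n + 1 / 2 - sqrt (3 * n ^ 2 - n + 1 / 4) <= a ->
  a / n >= 2 - sqrt 3 + (3 + sqrt 3) / (6 * n) - sqrt 3 / (24 * n ^ 2).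
Proof.
  intros Hn Ha.
  pose proof (sqrt_discriminant_bound n Hn) as Hs.
  set (y := n - 1 / 6 + 1 / (24 * n)) in Hs.
  assert (Hlow : (2 * n + 1 / 2 - sqrt 3 * y) / n <= a / n).
  { apply Rmult_le_compat_r; [apply Rlt_le, Rinv_0_lt_compat; lra | lra]. }
  replace ((2 * n + 1 / 2 - sqrt 3 * y) / n)
    with (2 - sqrt 3 + (3 + sqrt 3) / (6 * n) - sqrt 3 / (24 * n ^ 2)) in Hlow
    by (unfold y; field; lra).
  lra.
Qed.

Lemma approval_bounds (n a : R) :
  1 <= n -> n * n + a * a + 3 * n <= 4 * n * a + a ->
  2 * n + 1 / 2 - sqrt (3 * n ^ 2 - n + 1 / 4) <= a /\
  a / n >= 2 - sqrt 3 + (3 + sqrt 3) / (6 * n) - sqrt 3 / (24 * n ^ 2) /\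
  n <= 2 * a - 3 / 2 + sqrt (3 * a ^ 2 - 5 * a + 9 / 4).
Proof.
  intros Hn Hq.
  destruct (quadratic_root_bounds a (2 * n + 1 / 2) (n ^ 2 + 3 * n)) as [Hlow _]; [nra|].
  destruct (quadratic_root_bounds n (2 * a - 3 / 2) (a ^ 2 - a)) as [_ Hup]; [nra|].
  replace ((2 * n + 1 / 2) ^ 2 - (n ^ 2 + 3 * n)) with (3 * n ^ 2 - n + 1 / 4) in Hlow
    by field.
  replace ((2 * a - 3 / 2) ^ 2 - (a ^ 2 - a)) with (3 * a ^ 2 - 5 * a + 9 / 4) in Hup
    by field.
  split; [exact Hlow | split; [apply ratio_of_lower_bound; assumption | exact Hup]].
Qed.

Lemma Rceil_le (x : R) (z : Z) : x <= IZR z -> (Rceil x <= z)%Z.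
Proof.
  intro Hx. unfold Rceil, Rfloor.
  destruct (archimed (- x)) as [Hup _].
  assert (Hlt : IZR (- z) < IZR (up (- x))) by (rewrite opp_IZR; lra).
  apply lt_IZR in Hlt. lia.
Qed.

Lemma le_Rfloor (x : R) (z : Z) : IZR z <= x -> (z <= Rfloor x)%Z.
Proof.
  intro Hx. unfold Rfloor.
  destruct (archimed x) as [Hup _].
  assert (Hlt : IZR z < IZR (up x)) by lra.
  apply lt_IZR in Hlt. lia.
Qed.

Theorem theorem4p1 (S : society) (k : nat) :
  (1 <= length S)%nat ->
  double_interval_society S ->
  pairwise_intersecting S ->
  is_approval_number S k ->
  let n := INR (length S) in
  let a := INR k in
  (Z.of_nat k >= Rceil (2 * n + 1 / 2 - sqrt (3 * n ^ 2 - n + 1 / 4)))%Z /\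
  a / n >= 2 - sqrt 3 + (3 + sqrt 3) / (6 * n) - sqrt 3 / (24 * n ^ 2) /\
  (Z.of_nat (length S) <= Rfloor (2 * a - 3 / 2 + sqrt (3 * a ^ 2 - 5 * a + 9 / 4)))%Z.
Proof.
  intros Hn Hval Hmeet Hk n a.
  assert (Hn1 : 1 <= n) by (apply le_INR in Hn; exact Hn).
  assert (Hq : n * n + a * a + 3 * n <= 4 * n * a + a).
  { pose proof (le_INR _ _ (Counting.approval_number_quadratic S k Hn Hval Hmeet Hk)) as H.
    rewrite !plus_INR, !mult_INR in H. unfold n, a. simpl (INR 3) in H; simpl (INR 4) in H.
    lra. }
  destruct (approval_bounds n a Hn1 Hq) as [Hlow [Hratio Hup]].
  split; [|split; [exact Hratio|]].
  - apply Z.le_ge, Rceil_le. rewrite <- INR_IZR_INZ. exact Hlow.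
  - apply le_Rfloor. rewrite <- INR_IZR_INZ. exact Hup.
Qed.
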